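(* Let $T\in\mathbb{R}$, $\tau>0$, $\gamma>0$, and define $f_\tau:\mathbb{R}\to\mathbb{R}$ by $f_\tau(x)=0$ if $x-T<-\tau/2$, $f_\tau(x)=\frac1\tau(x-T)+\frac12$ if $-\tau/2\le x-T\le\tau/2$, and $f_\tau(x)=1$ if $x-T>\tau/2$. Let $g_E(x,x')=e^{\gamma|x-x'|}$. Then the $g_E$-smooth sensitivity of $f_\tau$, $B^*(x)=\sup_{z\in\mathbb{R}}\frac{\mathrm{L}_{f_\tau,\infty}(z)}{g_E(x,z)}$, satisfies $B^*(x)=\max\left(\frac{1}{|x-T|+\tau/2},\ \frac1\tau e^{-\gamma(|x-T|-\tau/2)}\right)$ if $|x-T|>\tau/2$, and $B^*(x)=\frac1\tau$ if $|x-T|\le\tau/2$.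
   Context: $\mathbb{R}$ carries the metric $|x-x'|$. For $x\in\mathbb{R}$, $\mathrm{L}_{f,\infty}(x)$ is the infimum of all $K$ such that $|f(x)-f(x')|\le K|x-x'|$ for all $x'\in\mathbb{R}$. *)

From HB Require Import structures.
From mathcomp Require Import all_boot all_order all_algebra.
From mathcomp Require Import all_classical all_reals all_analysis.
Set Implicit Arguments. Unset Strict Implicit. Unset Printing Implicit Defensive.
Import Order.TTheory GRing.Theory Num.Theory.
Import numFieldNormedType.Exports.
Local Open Scope classical_set_scope.
Local Open Scope ring_scope.

Definition ftau {R : realType} (T tau : R) (x : R) : R :=
  if x - T < - (tau / 2) then 0
  else if x - T <= tau / 2 then (x - T) / tau + 1 / 2
  else 1.

Definition local_lip {R : realType} (f : R -> R) (x : R) : \bar R :=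
  ereal_inf [set K%:E | K in [set K : R | forall x' : R,
                                   `|f x - f x'| <= K * `|x - x'|]].

Definition gE {R : realType} (gamma : R) (x x' : R) : R :=
  expR (gamma * `|x - x'|).

Definition smooth_sens {R : realType} (f : R -> R) (g : R -> R -> R) (x : R)
  : \bar R :=
  ereal_sup [set (local_lip f z * ((g x z)^-1)%:E)%E | z in [set: R]].

(* Write f_tau(x) = r(x - T) / tau, where r is the ramp of slope 1 on [-h, h],
   h = tau / 2, clamped to [0, tau].  The local Lipschitz constant of f_tau at
   T + w is 1/tau for |w| <= h and 1/(|w| + h) for |w| > h: the steepest secant
   from T + w goes to the far end of the ramp.  With v = x - T, B*(x) is the
   supremum over w of L(w) e^(-gamma |v - w|).  In the only non-monotone range
   h < |w| < |v| this equals e^(-gamma |v|) e^(gamma s) / (s + h), s = |w|, and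
   s |-> e^(gamma s) / (s + h) is log-convex, hence maximal at s = h or s = |v|.
   So the supremum is attained, at w = v or at the near end of the ramp. *)

From HB Require Import structures.
From mathcomp Require Import all_boot all_order all_algebra.
From mathcomp Require Import all_classical all_reals all_analysis.
From mathcomp Require Import ring lra.
Import Order.TTheory GRing.Theory Num.Theory.
Import numFieldNormedType.Exports.
Local Open Scope classical_set_scope.
Local Open Scope ring_scope.

Section Ramp.
Context {R : realType} (h : R).

Definition ramp (u : R) : R :=
  if u < - h then 0 else if u <= h then u + h else h + h.

Definition far_end (a : R) : R := if 0 < a then - h else h.

Lemma ramp_lipschitz a b : 0 <= h -> `|ramp a - ramp b| <= `|a - b|.
Proof.
have := ler_norm (a - b); have := ler_norm (b - a); rewrite (distrC b a).
rewrite /ramp ler_norml.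
case: (ltP a (-h)); case: (leP a h); case: (ltP b (-h)); case: (leP b h);
  move=> *; apply/andP; split; lra.
Qed.

Lemma ramp_le u : 0 <= h -> ramp u <= h + h.
Proof. by rewrite /ramp; case: (ltP u (-h)); case: (leP u h) => *; lra. Qed.

Lemma rampN u : 0 <= h -> ramp (- u) = h + h - ramp u.
Proof.
rewrite /ramp; case: (ltP u (-h)); case: (leP u h); case: (ltP (- u) (-h));
  case: (leP (- u) h) => *; lra.
Qed.

Lemma ramp_secant_right a b : 0 <= h -> h < a ->
  (h + h - ramp b) * (a + h) <= (h + h) * `|a - b|.
Proof.
move=> h_ge0 ha; have dab := ler_norm (a - b); have := normr_ge0 (a - b).
have hd : 0 <= h * (`|a - b| - (a - b)) by apply: mulr_ge0; lra.
rewrite /ramp; case: (ltP b (-h)); case: (leP b h) => *; nra.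
Qed.

Lemma ramp_secant_outside a b : 0 <= h -> h < `|a| ->
  `|ramp a - ramp b| * (`|a| + h) <= (h + h) * `|a - b|.
Proof.
move=> h_ge0; wlog a_gt0 : a b / 0 < a => [secant_pos|].
  have [a_gt0|a_le0] := ltP 0 a; first exact: secant_pos.
  move=> ha; have := secant_pos (- a) (- b).
  rewrite !rampN // !normrN -opprD normrN.
  have -> : h + h - ramp a - (h + h - ramp b) = - (ramp a - ramp b) by ring.
  by rewrite normrN; apply => //; rewrite -(ler0_norm a_le0); lra.
rewrite gtr0_norm // => ha.
have -> : ramp a = h + h.
  by rewrite /ramp; case: (ltP a (-h)); case: (leP a h) => *; lra.
by rewrite ger0_norm ?subr_ge0 ?ramp_le ?ramp_secant_right.
Qed.

Lemma dist_far_end a : 0 <= h -> `|a - far_end a| = `|a| + h.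
Proof.
rewrite /far_end; case: (ltP 0 a) => a0 h_ge0.
- by rewrite opprK gtr0_norm ?(gtr0_norm a0) //; lra.
- by rewrite ler0_norm ?(ler0_norm a0) //; lra.
Qed.

Lemma ramp_far_end a : 0 <= h ->
  `|ramp a - ramp (far_end a)| = Num.min (`|a| + h) (h + h).
Proof.
move=> h_ge0; have Nh_le_h : - h <= h by lra.
have h_lt_Nh : (h < - h) = false by apply/negbTE; rewrite -leNgt.
rewrite /far_end /ramp; case: (ltP 0 a) => a0.
- rewrite ltxx (gtr0_norm a0) Nh_le_h addNr subr0.
  case: (ltP a (-h)); case: (leP a h) => *; [lra|lra| |].
  + by rewrite ger0_norm ?min_l //; lra.
  + by rewrite ger0_norm ?min_r //; lra.
- rewrite lexx (ler0_norm a0) h_lt_Nh.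
  case: (ltP a (-h)); case: (leP a h) => *; [|lra| |lra].
  + by rewrite sub0r normrN ger0_norm ?min_r //; lra.
  + by rewrite ler0_norm ?min_l //; lra.
Qed.

End Ramp.

Lemma local_lip_sharp {R : realType} (f : R -> R) (z z0 K : R) : z0 != z ->
  (forall x, `|f z - f x| <= K * `|z - x|) ->
  `|f z - f z0| = K * `|z - z0| -> local_lip f z = K%:E.
Proof.
move=> z0z bound sharp; apply/le_anti/andP; split.
- by apply: ereal_inf_lbound; exists K.
- apply: le_ereal_inf_tmp => _ [K' K'bound <-]; rewrite lee_fin.
  have d_gt0 : 0 < `|z - z0| by rewrite normr_gt0 subr_eq0 eq_sym.
  by rewrite -(ler_pM2r d_gt0) -sharp.
Qed.

Lemma ftauE {R : realType} (T tau x : R) : 0 < tau ->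
  ftau T tau x = ramp (tau / 2) (x - T) / tau.
Proof.
move=> tau_gt0; rewrite /ftau /ramp; case: ifP => _; first by rewrite mul0r.
by case: ifP => _; field; lra.
Qed.

Definition ftau_lip {R : realType} (tau w : R) : R :=
  if tau / 2 < `|w| then (`|w| + tau / 2)^-1 else tau^-1.

Lemma local_lip_ftau {R : realType} (T tau z : R) : 0 < tau ->
  local_lip (ftau T tau) z = (ftau_lip tau (z - T))%:E.
Proof.
move=> tau_gt0; rewrite /ftau_lip.
have ftau_dist x : `|ftau T tau z - ftau T tau x|
    = `|ramp (tau / 2) (z - T) - ramp (tau / 2) (x - T)| / tau.
  by rewrite !ftauE // -mulrBl normrM [`|tau^-1|]gtr0_norm ?invr_gt0.
have zxE x : z - x = (z - T) - (x - T) by ring.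
have tauE : tau = tau / 2 + tau / 2 by lra.
have h_gt0 : 0 < tau / 2 by lra.
move: (tau / 2) tauE h_gt0 ftau_dist => h tauE h_gt0 ftau_dist.
have h_ge0 := ltW h_gt0.
move: (z - T) zxE ftau_dist => a zxE ftau_dist.
have far_dist : `|z - (T + far_end h a)| = `|a| + h.
  by rewrite zxE [T + _ - T]addrC addKr dist_far_end.
apply: (@local_lip_sharp _ _ _ (T + far_end h a)).
- rewrite -subr_eq0 -normr_eq0 distrC far_dist.
  by apply/lt0r_neq0; have := normr_ge0 a; lra.
- move=> x; rewrite ftau_dist (zxE x).
  case: ifP => ha.
  + rewrite [(_ + h)^-1 * _]mulrC ler_pdivlMr; last by have := normr_ge0 a; lra.
    by rewrite mulrAC ler_pdivrMr // [_ * tau]mulrC tauE ramp_secant_outside.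
  + by rewrite mulrC ler_wpM2l ?ramp_lipschitz // invr_ge0 ltW.
- rewrite ftau_dist [T + _ - T]addrC addKr ramp_far_end // far_dist.
  case: ifP => ha.
  + rewrite min_r; last lra.
    by rewrite -tauE divff ?mulVf //; apply/lt0r_neq0; lra.
  + by rewrite min_l 1?mulrC //; lra.
Qed.

Section ExpOverAffine.
Context {R : realType} (gamma c : R).

Lemma expR_div_le_right s b : 0 < s + c -> 1 <= gamma * (s + c) -> s <= b ->
  expR (gamma * s) / (s + c) <= expR (gamma * b) / (b + c).
Proof.
move=> sc_gt0 steep sb; have bc_gt0 : 0 < b + c by lra.
rewrite ler_pdivrMr // mulrAC ler_pdivlMr //.
rewrite (_ : gamma * b = gamma * s + gamma * (b - s)); last by ring.
(* e^(gamma (b - s)) >= 1 + gamma (b - s) >= 1 + (b - s) / (s + c) *)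
rewrite expRD; have := expR_ge1Dx (gamma * (b - s)).
have := expR_gt0 (gamma * s).
move: (expR (gamma * s)) (expR (gamma * (b - s))) => E F E_gt0 F_ge.
have : 0 <= E * ((gamma * (s + c) - 1) * (b - s)).
  by apply: mulr_ge0; [lra | apply: mulr_ge0; lra].
have : 0 <= E * (s + c) * (F - (1 + gamma * (b - s))).
  by apply: mulr_ge0; [apply: mulr_ge0; lra | lra].
nra.
Qed.

Lemma expR_div_le_left a s : 0 < a + c -> gamma * (s + c) <= 1 -> a <= s ->
  expR (gamma * s) / (s + c) <= expR (gamma * a) / (a + c).
Proof.
move=> ac_gt0 flat a_le_s; have sc_gt0 : 0 < s + c by lra.
(* e^(gamma (s - a)) <= e^u <= 1/(1 - u) = (s + c)/(a + c), as 1 - u <= e^-u *)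
set u := (s - a) / (s + c).
have u_ge : gamma * (s - a) <= u.
  rewrite /u ler_pdivlMr //.
  have : 0 <= (1 - gamma * (s + c)) * (s - a) by apply: mulr_ge0; lra.
  nra.
have acE : a + c = (1 - u) * (s + c) by rewrite /u; field; lra.
have u_lt1 : u < 1 by rewrite /u ltr_pdivrMr //; lra.
have := expR_ge1Dx (- u); rewrite acE => eNu.
rewrite (_ : gamma * s = gamma * a + gamma * (s - a)); last by ring.
rewrite expRD ler_pdivrMr // mulrAC ler_pdivlMr ?mulr_gt0 //; last by lra.
rewrite -mulrA ler_pM2l ?expR_gt0 // mulrA -[leRHS]mul1r ler_pM2r //.
apply: (le_trans (y := expR u * (1 - u))).
  by rewrite ler_pM2r ?subr_gt0 // ler_expR.
apply: (le_trans (y := expR u * expR (- u))).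
  by rewrite ler_pM2l ?expR_gt0 //; lra.
by rewrite expRN divff // gt_eqF ?expR_gt0.
Qed.

Lemma expR_div_le_max a s b : 0 < a + c -> a <= s -> s <= b ->
  expR (gamma * s) / (s + c)
    <= Num.max (expR (gamma * a) / (a + c)) (expR (gamma * b) / (b + c)).
Proof.
move=> ac_gt0 a_le_s s_le_b; rewrite le_max; apply/orP.
have [steep|flat] := leP 1 (gamma * (s + c)).
- by right; apply: expR_div_le_right => //; lra.
- by left; apply: expR_div_le_left => //; lra.
Qed.

End ExpOverAffine.

Definition ftau_sens {R : realType} (tau gamma v : R) : R :=
  if tau / 2 < `|v|
  then Num.max (1 / (`|v| + tau / 2))
               (1 / tau * expR (- (gamma * (`|v| - tau / 2))))
  else 1 / tau.

Lemma expR_decay_div_le_max {R : realType} (h gamma s V : R) :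
  0 < h -> h <= s -> s <= V ->
  (s + h)^-1 * expR (- (gamma * (V - s)))
    <= Num.max ((V + h)^-1) ((h + h)^-1 * expR (- (gamma * (V - h)))).
Proof.
move=> h_gt0 h_le_s s_le_V.
have shift t :
    expR (- (gamma * (V - t))) = expR (- (gamma * V)) * expR (gamma * t).
  by rewrite -expRD; congr expR; ring.
have unit : (V + h)^-1 = expR (- (gamma * V)) * (expR (gamma * V) / (V + h)).
  by rewrite mulrA -expRD addNr expR0 mul1r.
rewrite !shift unit [(s + h)^-1 * _]mulrCA [(h + h)^-1 * _]mulrCA.
rewrite -maxr_pMr ?expR_ge0 // ler_pM2l ?expR_gt0 // maxC ![_^-1 * expR _]mulrC.
by apply: expR_div_le_max; lra.
Qed.

Lemma ftau_lip_decay_le {R : realType} (tau gamma v w : R) :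
  0 < tau -> 0 <= gamma ->
  ftau_lip tau w * expR (- (gamma * `|v - w|)) <= ftau_sens tau gamma v.
Proof.
move=> tau_gt0 gamma_ge0; rewrite /ftau_lip /ftau_sens !div1r.
have tauE : tau = tau / 2 + tau / 2 by lra.
have h_gt0 : 0 < tau / 2 by lra.
move: (tau / 2) tauE h_gt0 => h -> h_gt0.
have decay_le c :
    c <= `|v - w| -> expR (- (gamma * `|v - w|)) <= expR (- (gamma * c)).
  by move=> c_le; rewrite ler_expR lerN2 ler_wpM2l.
have decay_le1 : expR (- (gamma * `|v - w|)) <= 1.
  by have := decay_le 0 (normr_ge0 _); rewrite mulr0 oppr0 expR0.
have dist_ge := lerB_dist v w.
have := normr_ge0 w; have := normr_ge0 v => v_ge0 w_ge0.
have inv_ge0 t : 0 < t -> 0 <= t^-1 by move=> ?; rewrite invr_ge0 ltW.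
case: ifP => hw; case: ifP => hv.
- have [v_le_w|w_lt_v] := leP `|v| `|w|.
  + rewrite le_max; apply/orP; left; rewrite -[leRHS]mulr1.
    by apply: ler_pM; rewrite ?inv_ge0 ?expR_ge0 ?lef_pV2 ?posrE //; lra.
  + have := expR_decay_div_le_max _ gamma _ _ h_gt0 (ltW hw) (ltW w_lt_v).
    apply: le_trans.
    by rewrite ler_pM2l ?invr_gt0 ?decay_le //; lra.
- rewrite -[leRHS]mulr1.
  by apply: ler_pM; rewrite ?inv_ge0 ?expR_ge0 ?lef_pV2 ?posrE //; lra.
- rewrite le_max; apply/orP; right.
  by rewrite ler_pM2l ?invr_gt0 ?decay_le //; lra.
- by rewrite -[leRHS]mulr1 ler_pM2l ?invr_gt0 //; lra.
Qed.

Lemma ftau_sens_attained {R : realType} (tau gamma v : R) : 0 < tau ->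
  exists w,
    ftau_lip tau w * expR (- (gamma * `|v - w|)) = ftau_sens tau gamma v.
Proof.
move=> tau_gt0; rewrite /ftau_lip /ftau_sens !div1r.
have tauE : tau = tau / 2 + tau / 2 by lra.
have h_gt0 : 0 < tau / 2 by lra.
move: (tau / 2) tauE h_gt0 => h -> h_gt0.
have at_v : expR (- (gamma * `|v - v|)) = 1.
  by rewrite subrr normr0 mulr0 oppr0 expR0.
case: ifP => hv; last by exists v; rewrite at_v hv mulr1.
case: (leP ((h + h)^-1 * expR (- (gamma * (`|v| - h)))) (`|v| + h)^-1) => cmp.
- by exists v; rewrite at_v hv mulr1.
- exists (if 0 < v then h else - h).
  have [v_gt0|v_le0] := ltP 0 v; rewrite ?normrN gtr0_norm // ltxx.
  + rewrite (gtr0_norm v_gt0) ger0_norm //.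
    by rewrite (gtr0_norm v_gt0) in hv; lra.
  + rewrite (ler0_norm v_le0) ler0_norm.
      by rewrite opprD opprK.
    by rewrite (ler0_norm v_le0) in hv; lra.
Qed.

Theorem mainTheorem8 (R : realType) (T tau gamma : R)
  (htau : 0 < tau) (hgamma : 0 < gamma) (x : R) :
  smooth_sens (ftau T tau) (gE gamma) x =
  (if tau / 2 < `|x - T|
   then Num.max (1 / (`|x - T| + tau / 2))
                (1 / tau * expR (- (gamma * (`|x - T| - tau / 2))))
   else 1 / tau)%:E.
Proof.
rewrite -[X in _ = X%:E]/(ftau_sens tau gamma (x - T)).
have valueE z : (local_lip (ftau T tau) z * ((gE gamma x z)^-1)%:E)%E
    = (ftau_lip tau (z - T) * expR (- (gamma * `|(x - T) - (z - T)|)))%:E.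
  by rewrite local_lip_ftau // /gE -expRN opprB addrA subrK.
apply/le_anti/andP; split.
- apply: ge_ereal_sup => _ [z _ <-].
  by rewrite valueE lee_fin ftau_lip_decay_le // ltW.
- have [w <-] := ftau_sens_attained tau gamma (x - T) htau.
  by apply: ereal_sup_ubound; exists (w + T) => //; rewrite valueE addrK.
Qed.
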